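(* Let $k\ge 2$ and let $P=(p_1,\dots,p_k)$ and $Q=(q_1,\dots,q_k)$ be two multinomial (categorical) probability distributions over the same index set $\{1,\dots,k\}$. Suppose the indices of the largest probabilities of $P$ and $Q$ do not match, i.e. $\arg\max_i p_i \neq \arg\max_j q_j$. Then $$d_{\chi^2}(Q,P)\;\ge\; \frac{(p_{(1)}-p_{(2)})^2}{(p_{(1)}+p_{(2)})-(p_{(1)}-p_{(2)})^2},$$ where $p_{(1)}$ and $p_{(2)}$ denote the first and second largest probabilities among $p_1,\dots,p_k$.
   Context: The chi-squared distance is $d_{\chi^2}(Q,P)=\sum_{i=1}^k\frac{(q_i-p_i)^2}{p_i}=\sum_{i=1}^k\frac{q_i^2}{p_i}-1$ (taken to be $+\infty$ if some $q_i>0=p_i$). *)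

From HB Require Import structures.
From mathcomp Require Import all_boot all_order all_algebra.
From mathcomp Require Import reals constructive_ereal.
Set Implicit Arguments. Unset Strict Implicit. Unset Printing Implicit Defensive.
Import Order.TTheory GRing.Theory Num.Theory.
Local Open Scope ring_scope.

Definition is_distr (R : realType) (k : nat) (p : 'I_k -> R) : Prop :=
  (forall i, 0 <= p i) /\ \sum_(i < k) p i = 1.

Definition chi2 (R : realType) (k : nat) (q p : 'I_k -> R) : \bar R :=
  if [exists i, (0 < q i) && (p i == 0)] then +oo%E
  else (\sum_(i < k) (q i - p i) ^+ 2 / p i)%:E.

Definition is_argmax (R : realType) (k : nat) (p : 'I_k -> R) (i : 'I_k) : Prop :=
  forall j, p j <= p i.

Definition sorted_desc (R : realType) (k : nat) (p : 'I_k -> R) : seq R :=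
  sort (fun x y : R => y <= x) [seq p i | i <- enum 'I_k].

Definition pfirst (R : realType) (k : nat) (p : 'I_k -> R) : R :=
  nth 0 (sorted_desc p) 0.
Definition psecond (R : realType) (k : nat) (p : 'I_k -> R) : R :=
  nth 0 (sorted_desc p) 1.

(** The chi-squared distance dominates every test-function bound: by
    [u^2/p >= 2 t w u - t^2 w^2 p] summed over the index set,
    [2 t (E_Q w - E_P w) - t^2 E_P w^2 <= d(Q,P)] for all [t].  With [i] the
    argmax of [P], [j <> i] the argmax of [Q], [mu = p_(1) - p_(2)] and the
    test function [w = mu + 1_j - 1_i], one gets [E_Q w - E_P w >= mu]
    (as [q_j >= q_i]) and [E_P w^2 <= p_(1) + p_(2) - mu^2] (as [p_j <= p_(2)]);
    the choice [t = mu / (p_(1) + p_(2) - mu^2)] gives the bound. *)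
From HB Require Import structures.
From mathcomp Require Import all_boot all_order all_algebra.
From mathcomp Require Import reals constructive_ereal.
From mathcomp Require Import ring lra.
Import Order.TTheory GRing.Theory Num.Theory.
Local Open Scope ring_scope.

Lemma sorted_ge_head_max {R : numDomainType} {x : R} {s : seq R} :
  sorted (fun x y => y <= x) (x :: s) -> {in x :: s, forall y, y <= x}.
Proof.
have ge_trans : transitive (fun x y : R => y <= x).
  by move=> y z t /= zy ty; exact: le_trans ty zy.
move=> /(order_path_min ge_trans)/allP s_le y.
by rewrite inE => /predU1P[-> //|/s_le].
Qed.

Section OrderStatistics.
Context {R : realType} {k : nat} (p : 'I_k -> R).

Lemma perm_sorted_desc : perm_eq (sorted_desc p) [seq p l | l <- enum 'I_k].
Proof. by rewrite /sorted_desc perm_sort. Qed.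

Lemma sorted_sorted_desc : sorted (fun x y => y <= x) (sorted_desc p).
Proof. by apply: sort_sorted => x y; exact: le_total. Qed.

Lemma size_sorted_desc : size (sorted_desc p) = k.
Proof. by rewrite size_sort size_map size_enum_ord. Qed.

Lemma pfirst_argmax {i} : is_argmax p i -> pfirst p = p i.
Proof.
move=> i_max; have := perm_mem perm_sorted_desc; have := sorted_sorted_desc.
have i_in : p i \in [seq p l | l <- enum 'I_k] by rewrite map_f ?mem_enum.
rewrite /pfirst; case: (sorted_desc p) => [_ /(_ (p i))|x s s_sorted s_mem].
  by rewrite i_in.
have /mapP[l _ x_eq] : x \in [seq p l | l <- enum 'I_k] by rewrite -s_mem mem_head.
apply/le_anti; rewrite {1}x_eq i_max (sorted_ge_head_max s_sorted) //.
by rewrite s_mem.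
Qed.

Lemma psecond_ge_other {i j} : is_argmax p i -> j != i -> p j <= psecond p.
Proof.
move=> i_max ji.
have i_in : i \in enum 'I_k by rewrite mem_enum.
have j_in : j \in rem i (enum 'I_k) by rewrite mem_rem_uniq ?enum_uniq // inE ji mem_enum.
have perm_ij : perm_eq (sorted_desc p)
    (p i :: p j :: [seq p l | l <- rem j (rem i (enum 'I_k))]).
  apply: perm_trans perm_sorted_desc _; rewrite -!map_cons perm_map //.
  by apply: perm_trans (perm_to_rem i_in) _; rewrite perm_cons perm_to_rem.
have := pfirst_argmax i_max; have := sorted_sorted_desc.
rewrite /pfirst /psecond; case: (sorted_desc p) perm_ij => [/perm_size //|x s].
move=> + /path_sorted + /= x_eq; rewrite x_eq perm_cons.
case: s => [/perm_size //|y s] perm_ij s_sorted.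
by apply: (sorted_ge_head_max s_sorted); rewrite (perm_mem perm_ij) mem_head.
Qed.

Lemma psecond_le_pfirst : (1 < k)%N -> psecond p <= pfirst p.
Proof.
rewrite /pfirst /psecond; have := size_sorted_desc; have := sorted_sorted_desc.
by case: (sorted_desc p) => [|x [|y s]] /= s_sorted <- //; case/andP: s_sorted.
Qed.

End OrderStatistics.

Lemma tangent_le_sqr_div {R : realFieldType} (u p w : R) :
  0 <= p -> (p = 0 -> u = 0) -> 2 * w * u - w ^+ 2 * p <= u ^+ 2 / p.
Proof.
move=> p_ge0 u0; have [p0|p_neq0] := eqVneq p 0.
  by rewrite p0 (u0 p0) !mulr0 expr0n /= mul0r subrr.
rewrite -subr_ge0.
have -> : u ^+ 2 / p - (2 * w * u - w ^+ 2 * p) = (u - w * p) ^+ 2 / p by field.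
by rewrite divr_ge0 ?sqr_ge0.
Qed.

Section ChiSquareTestBound.
Context {R : realFieldType} {k : nat} {p q : 'I_k -> R}.
Hypotheses (p_ge0 : forall l, 0 <= p l) (q_abs_cont : forall l, p l = 0 -> q l = 0).

Lemma chi2_sum_ge0 : 0 <= \sum_l (q l - p l) ^+ 2 / p l.
Proof. by apply: sumr_ge0 => l _; rewrite divr_ge0 ?sqr_ge0. Qed.

Lemma chi2_sum_ge_test (w : 'I_k -> R) (t : R) :
  2 * t * (\sum_l w l * (q l - p l)) - t ^+ 2 * (\sum_l w l ^+ 2 * p l)
  <= \sum_l (q l - p l) ^+ 2 / p l.
Proof.
rewrite !mulr_sumr -sumrB; apply: ler_sum => l _.
have -> : 2 * t * (w l * (q l - p l)) - t ^+ 2 * (w l ^+ 2 * p l)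
        = 2 * (t * w l) * (q l - p l) - (t * w l) ^+ 2 * p l by ring.
by apply: tangent_le_sqr_div => // pl0; rewrite pl0 q_abs_cont ?subr0.
Qed.

End ChiSquareTestBound.

Lemma sqr_div_le_of_quadratic_bound {R : realFieldType} {mu N D E S : R} :
  0 <= mu <= N -> D <= E -> 0 < E ->
  (forall t, 2 * t * N - t ^+ 2 * D <= S) -> mu ^+ 2 / E <= S.
Proof.
move=> /andP[mu_ge0 mu_le] DE E_gt0 bound; apply: le_trans (bound (mu / E)).
have t_ge0 : 0 <= mu / E by rewrite divr_ge0 // ltW.
have -> : mu ^+ 2 / E = 2 * (mu / E) * mu - (mu / E) ^+ 2 * E.
  by field; rewrite gt_eqF.
apply: lerB; first by rewrite ler_wpM2l // mulr_ge0.
by rewrite ler_wpM2l ?sqr_ge0.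
Qed.

Lemma sum_indicator_mul {R : pzSemiRingType} {k : nat} (f : 'I_k -> R) (m : 'I_k) :
  \sum_l (l == m)%:R * f l = f m.
Proof.
rewrite (bigD1 m) //= eqxx mul1r big1 ?addr0 // => l /negbTE->.
by rewrite mul0r.
Qed.

Section SwapWeight.
Context {R : realFieldType} {k : nat} (i j : 'I_k) (mu : R).
Hypothesis ij : i != j.

Definition swap_weight (l : 'I_k) : R := mu + (l == j)%:R - (l == i)%:R.

Lemma sum_swap_weight_mul (f : 'I_k -> R) :
  \sum_l swap_weight l * f l = mu * \sum_l f l + f j - f i.
Proof.
under eq_bigr do rewrite /swap_weight mulrBl mulrDl.
by rewrite sumrB big_split /= -mulr_sumr !sum_indicator_mul.
Qed.

Lemma swap_weight_sqr l :
  swap_weight l ^+ 2 = mu ^+ 2 + (2 * mu + 1) * (l == j)%:R + (1 - 2 * mu) * (l == i)%:R.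
Proof.
rewrite /swap_weight.
case: (eqVneq l j) => [->|_]; first rewrite eq_sym (negbTE ij).
  by rewrite /=; ring.
by case: (eqVneq l i) => _; rewrite /=; ring.
Qed.

Lemma sum_swap_weight_sqr_mul (f : 'I_k -> R) :
  \sum_l swap_weight l ^+ 2 * f l
  = mu ^+ 2 * \sum_l f l + (2 * mu + 1) * f j + (1 - 2 * mu) * f i.
Proof.
under eq_bigr do rewrite swap_weight_sqr 2!mulrDl -mulrA -(mulrA (1 - 2 * mu)).
by rewrite !big_split /= -!mulr_sumr !sum_indicator_mul.
Qed.

End SwapWeight.

Theorem mainTheorem3 (R : realType) (k : nat) (p q : 'I_k -> R) :
  (2 <= k)%N ->
  is_distr p -> is_distr q ->
  (exists i j : 'I_k, [/\ is_argmax p i, is_argmax q j & i != j]) ->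
  (((pfirst p - psecond p) ^+ 2
     / ((pfirst p + psecond p) - (pfirst p - psecond p) ^+ 2))%:E
  <= chi2 q p)%E.
Proof.
move=> k_gt1 [p_ge0 p_sum1] [q_ge0 q_sum1] [i [j [i_max j_max ij]]].
rewrite /chi2; case: ifPn => [_|no_mass_out]; first exact: leey.
have q_abs_cont l : p l = 0 -> q l = 0.
  move=> pl0; move: no_mass_out; rewrite negb_exists => /forallP/(_ l).
  by rewrite pl0 eqxx andbT -leNgt => ql_le0; apply/le_anti; rewrite ql_le0 q_ge0.
have := psecond_le_pfirst p k_gt1; rewrite lee_fin !(pfirst_argmax p i_max).
have : p j <= psecond p by apply: (psecond_ge_other p i_max); rewrite eq_sym.
set b := psecond p => pj_le b_le; set mu := p i - b.
have mu_ge0 : 0 <= mu by rewrite subr_ge0.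
have [E_gt0|E_le0] := ltP 0 (p i + b - mu ^+ 2); last first.
  apply: le_trans (chi2_sum_ge0 p_ge0); apply: mulr_ge0_le0; first exact: sqr_ge0.
  by rewrite invr_le0.
apply: (sqr_div_le_of_quadratic_bound _ _ E_gt0 (chi2_sum_ge_test p_ge0 q_abs_cont
  (swap_weight i j mu))).
- rewrite mu_ge0 sum_swap_weight_mul sumrB p_sum1 q_sum1 subrr mulr0 add0r.
  by have := j_max i; rewrite /mu; lra.
- rewrite sum_swap_weight_sqr_mul // p_sum1 mulr1 -subr_ge0.
  have -> : p i + b - mu ^+ 2 - (mu ^+ 2 + (2 * mu + 1) * p j + (1 - 2 * mu) * p i)
          = (2 * mu + 1) * (b - p j) by rewrite /mu; ring.
  by rewrite mulr_ge0 ?subr_ge0 // addr_ge0 ?mulr_ge0.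
Qed.
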